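(* Let $c\in C([0,1])$ with $c>0$ on $[0,1]$, and let $c^*=\max_{[0,1]}c$. For every $s>0$ and all $m_1,m_2\in C^1([0,1])$, $$\big|\lambda(s,m_1)-\lambda(s,m_2)\big|\le c^*\Big(e^{4s\|m_1-m_2\|_{C([0,1])}}-1\Big).$$
   Context: Fix an integer $d\ge1$. For $m\in C^1([0,1])$ and $s>0$, $\lambda(s,m)$ denotes the principal eigenvalue of $-\varphi''-\frac{d-1}{r}\varphi'-2s\,m'(r)\varphi'+c(r)\varphi=\lambda\varphi$ on $(0,1)$, $\varphi'(0)=\varphi'(1)=0$; equivalently $\lambda(s,m)=\min\{\int_0^1 r^{d-1}e^{2sm}(|\varphi'|^2+c\varphi^2)dr:\ \varphi\in H^1((0,1)),\ \int_0^1 r^{d-1}e^{2sm}\varphi^2dr=1\}$. $\|\cdot\|_{C([0,1])}$ is the sup norm. *)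

From HB Require Import structures.
From mathcomp Require Import all_boot all_order all_algebra.
From mathcomp Require Import all_classical all_reals all_analysis.
Set Implicit Arguments. Unset Strict Implicit. Unset Printing Implicit Defensive.
Import Order.TTheory GRing.Theory Num.Theory.
Import numFieldNormedType.Exports.
Local Open Scope classical_set_scope.
Local Open Scope ring_scope.

Section Defs.
Variable R : realType.
Local Notation mu := (@lebesgue_measure R).

Definition C1_01 (m : R -> R) : Prop :=
  {within `[(0%R:R), (1%R:R)], continuous m} /\
  exists dm : R -> R, {within `[(0%R:R), (1%R:R)], continuous dm} /\
    forall x : R, x \in `]0, 1[ -> is_derive x (1%R:R) m (dm x).

(* (phi, dphi) represents an element of H^1((0,1)): dphi is in L^2(0,1)
   (hence in L^1(0,1)) and phi is its primitive on [0,1]. *)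
Definition H1_01 (phi dphi : R -> R) : Prop :=
  measurable_fun `[(0%R:R), (1%R:R)] dphi /\
  mu.-integrable `[(0%R:R), (1%R:R)] (EFin \o dphi) /\
  (\int[mu]_(t in `[(0%R:R), (1%R:R)]) ((dphi t) ^+ 2)%:E < +oo)%E /\
  forall x : R, x \in `[(0%R:R), (1%R:R)] ->
    ((phi x)%:E = (phi 0%R)%:E + \int[mu]_(t in `[(0%R:R), x]) (dphi t)%:E)%E.

Definition weight (d : nat) (s : R) (m : R -> R) (r : R) : R :=
  r ^+ (d.-1) * expR (2 * s * m r).

Definition rayleigh (d : nat) (c : R -> R) (s : R) (m : R -> R)
    (phi dphi : R -> R) : \bar R :=
  (\int[mu]_(r in `[(0%R:R), (1%R:R)])
     (weight d s m r * ((dphi r) ^+ 2 + c r * (phi r) ^+ 2))%:E)%E.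

Definition wnorm2 (d : nat) (s : R) (m : R -> R) (phi : R -> R) : \bar R :=
  (\int[mu]_(r in `[(0%R:R), (1%R:R)]) (weight d s m r * (phi r) ^+ 2)%:E)%E.

(* principal eigenvalue, via the variational characterization
   (an infimum over H^1, which the paper notes is attained) *)
Definition lam (d : nat) (c : R -> R) (s : R) (m : R -> R) : \bar R :=
  ereal_inf [set rayleigh d c s m p.1 p.2
            | p in [set p : (R -> R) * (R -> R) |
                      H1_01 p.1 p.2 /\ wnorm2 d s m p.1 = 1%E]].

Definition supnorm01 (f : R -> R) : R := sup [set `|f x| | x in `[(0%R:R), (1%R:R)]].

Definition max01 (f : R -> R) : R := sup [set f x | x in `[(0%R:R), (1%R:R)]].
End Defs.

From HB Require Import structures.
From mathcomp Require Import all_boot all_order all_algebra.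
From mathcomp Require Import all_classical all_reals all_analysis.
From mathcomp Require Import ring lra.
Import Order.TTheory GRing.Theory Num.Theory.
Import numFieldNormedType.Exports.
Local Open Scope classical_set_scope.
Local Open Scope ring_scope.

Set Implicit Arguments. Unset Strict Implicit.

(* Changing m by at most δ in sup norm multiplies the weight r^(d-1) e^(2sm)
   by a factor in [e^(-2sδ), e^(2sδ)].  So for a test function normalised for
   m2, the Rayleigh numerator for m1 is at most e^(2sδ) times that for m2,
   while its normalisation constant for m1 is at least e^(-2sδ); rescaling it
   gives λ(s,m1) <= e^(4sδ) λ(s,m2), and symmetrically.  Together with
   0 <= λ <= c^* (test with the constant function 1) this yields
   |λ(s,m1) - λ(s,m2)| <= (e^(4sδ) - 1) c^*. *)

(* Variants of [ge0_le_integral] and [ge0_integralZl] without measurability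
   hypotheses: the test functions in [lam] are not known to be measurable. *)
Section ge0_integral_nonmeasurable.
Local Open Scope ereal_scope.
Context d (T : measurableType d) (R : realType).
Variables (mu : {measure set T -> \bar R}) (D : set T).

Lemma ge0_le_integral_nm (f g : T -> \bar R) :
  (forall x, D x -> 0 <= f x) -> (forall x, D x -> f x <= g x) ->
  \int[mu]_(x in D) f x <= \int[mu]_(x in D) g x.
Proof.
move=> f0 fg.
have g0 x : D x -> 0 <= g x by move=> Dx; exact: le_trans (f0 x Dx) (fg x Dx).
rewrite (ge0_integralE mu f0) (ge0_integralE mu g0).
apply: ereal_sup_le => _ [h hf <-]; exists h => // x.
apply: le_trans (hf x) _; rewrite /patch; case: ifP => // /set_mem; exact: fg.
Qed.

Lemma ge0_integralZl_le_nm (f : T -> \bar R) (k : R) : (0 < k)%R ->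
  (forall x, D x -> 0 <= f x) ->
  \int[mu]_(x in D) (k%:E * f x) <= k%:E * \int[mu]_(x in D) f x.
Proof.
move=> k0 f0.
have kf0 x : D x -> 0 <= k%:E * f x.
  by move=> Dx; rewrite mule_ge0 ?f0 // lee_fin ltW.
rewrite (ge0_integralE mu f0) (ge0_integralE mu kf0).
apply: ge_ereal_sup => _ [h hkf <-].
have ki0 : (0 <= k^-1)%R by rewrite invr_ge0 ltW.
pose h' := scale_nnsfun h ki0.
have -> : sintegral mu (HBNNSimple.NonNegSimpleFun.sort h) =
    k%:E * sintegral mu (HBNNSimple.NonNegSimpleFun.sort h').
  rewrite -sintegralrM; congr sintegral; apply/funext => x /=.
  by rewrite mulrA divff ?mul1r // gt_eqF.
rewrite lee_pmul2l ?lte_fin //; apply: ereal_sup_ubound; exists h' => // x /=.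
move: (hkf x); rewrite /patch; case: ifP => _ hx.
  by rewrite -(@lee_pmul2l _ k%:E) ?lte_fin // -EFinM mulrA divff ?gt_eqF // mul1r.
move: hx; rewrite /point/= !lee_fin => hx.
exact: mulr_ge0_le0.
Qed.

Lemma ge0_integralZl_nm (f : T -> \bar R) (k : R) : (0 <= k)%R ->
  (forall x, D x -> 0 <= f x) ->
  \int[mu]_(x in D) (k%:E * f x) = k%:E * \int[mu]_(x in D) f x.
Proof.
rewrite le_eqVlt => /predU1P[<- _|k0 f0].
  by rewrite mul0e; under eq_integral do rewrite mul0e; rewrite integral0.
apply/eqP; rewrite eq_le ge0_integralZl_le_nm //=.
have ki0 : (0 < k^-1)%R by rewrite invr_gt0.
have kf0 x : D x -> 0 <= k%:E * f x by move=> Dx; rewrite mule_ge0 ?f0 // lee_fin ltW.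
have := ge0_integralZl_le_nm ki0 kf0.
have -> : \int[mu]_(x in D) (k^-1%:E * (k%:E * f x)) = \int[mu]_(x in D) f x.
  by apply: eq_integral => x _; rewrite muleA -EFinM mulVf ?gt_eqF // mul1e.
move=> le_f_kf.
by rewrite -(@lee_pmul2l _ k^-1%:E) ?lte_fin // muleA -EFinM mulVf ?gt_eqF // mul1e.
Qed.

End ge0_integral_nonmeasurable.

Lemma lee_dist_of_ratio_bounds (R : realDomainType) (x y : \bar R) (C E : R) :
  1 <= E -> (0 <= x <= C%:E)%E -> (0 <= y <= C%:E)%E ->
  (x <= E%:E * y)%E -> (y <= E%:E * x)%E -> (`|x - y| <= (C * (E - 1))%:E)%E.
Proof.
move=> E1 /andP[x0 xC] /andP[y0 yC] + +.
have [a xa] : exists a, x = a%:E.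
  by exists (fine x); rewrite fineK // ge0_fin_numE // (le_lt_trans xC) ?ltry.
have [b yb] : exists b, y = b%:E.
  by exists (fine y); rewrite fineK // ge0_fin_numE // (le_lt_trans yC) ?ltry.
move: x0 xC y0 yC; rewrite xa yb -!EFinM -EFinB /= !lee_fin => a0 aC b0 bC ab ba.
by rewrite ler_norml; apply/andP; split; nra.
Qed.

Section lambda_estimates.
Variable R : realType.
Local Notation I01 := `[(0%R:R), (1%R:R)].
Local Notation mu := (@lebesgue_measure R).

Lemma continuous01_bounded (f : R -> R) :
  {within [set` I01], continuous f} ->
  exists M : R, forall x, x \in I01 -> `|f x| <= M.
Proof.
move=> f_cont.
have [a _ f_le] := EVT_max ler01 f_cont.
have [b _ ge_f] := EVT_min ler01 f_cont.
exists (`|f a| + `|f b|) => x x01; rewrite ler_norml.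
have := f_le x x01; have := ge_f x x01.
have := normr_ge0 (f a); have := normr_ge0 (f b).
have := ler_norm (f a); have := ler_norm (- f b); rewrite normrN.
by move=> *; apply/andP; split; lra.
Qed.

Lemma supnorm01_ub (f : R -> R) (M : R) :
  (forall x, x \in I01 -> `|f x| <= M) ->
  forall x, x \in I01 -> `|f x| <= supnorm01 f.
Proof.
move=> fM x x01; apply: sup_upper_bound; last by exists x.
split; first by exists `|f x|, x.
by exists M => _ [y y01 <-]; exact: fM.
Qed.

Lemma max01_ub (f : R -> R) (M : R) :
  (forall x, x \in I01 -> `|f x| <= M) ->
  forall x, x \in I01 -> f x <= max01 f.
Proof.
move=> fM x x01; apply: sup_upper_bound; last by exists x.
split; first by exists (f x), x.
by exists M => _ [y y01 <-]; exact: le_trans (ler_norm _) (fM y y01).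
Qed.

Section rayleigh_quotient.
Variables (d : nat) (c : R -> R) (s : R).
Hypothesis c_ge0 : forall x, x \in I01 -> 0 <= c x.

Lemma weight_ge0 (m : R -> R) x : x \in I01 -> 0 <= weight d s m x.
Proof.
by rewrite in_itv => /andP[x0 _]; rewrite /weight mulr_ge0 ?exprn_ge0 ?expR_ge0.
Qed.

Lemma rayleigh_integrand_ge0 (m phi dphi : R -> R) x : x \in I01 ->
  0 <= weight d s m x * (dphi x ^+ 2 + c x * phi x ^+ 2).
Proof.
move=> x01; rewrite mulr_ge0 ?weight_ge0 //.
by rewrite addr_ge0 ?sqr_ge0 // mulr_ge0 ?sqr_ge0 ?c_ge0.
Qed.

Lemma weight_le_expR (m1 m2 : R -> R) (δ : R) x : 0 <= s -> x \in I01 ->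
  `|m1 x - m2 x| <= δ -> weight d s m1 x <= expR (2 * s * δ) * weight d s m2 x.
Proof.
move=> s0; rewrite in_itv => /andP[x0 _] m12.
rewrite /weight mulrCA ler_wpM2l ?exprn_ge0 // -expRD ler_expR.
have := le_trans (ler_norm _) m12; nra.
Qed.

Lemma weighted_integral_le_expR (m1 m2 : R -> R) (δ : R) (g : R -> R) : 0 <= s ->
  (forall x, x \in I01 -> `|m1 x - m2 x| <= δ) ->
  (forall x, x \in I01 -> 0 <= g x) ->
  (\int[mu]_(r in [set` I01]) (weight d s m1 r * g r)%:E
     <= (expR (2 * s * δ))%:E * \int[mu]_(r in [set` I01]) (weight d s m2 r * g r)%:E)%E.
Proof.
move=> s0 m12 g0; rewrite -ge0_integralZl_nm ?expR_ge0 //; last first.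
  by move=> x x01; rewrite lee_fin mulr_ge0 ?weight_ge0 ?g0.
apply: ge0_le_integral_nm => x x01; first by rewrite lee_fin mulr_ge0 ?weight_ge0 ?g0.
by rewrite -EFinM lee_fin mulrA ler_wpM2r ?g0 ?weight_le_expR ?m12.
Qed.

Lemma H1_01Z (a : R) (phi dphi : R -> R) : H1_01 phi dphi ->
  H1_01 (fun x => a * phi x) (fun x => a * dphi x).
Proof.
case=> dphi_meas [dphi_int [dphi_L2 phi_prim]]; split.
  exact: measurable_realfun.measurable_funM (measurable_cst a) dphi_meas.
split; first exact: (integrableZl _ _ dphi_int).
split.
  have -> : (\int[mu]_(t in [set` I01]) ((a * dphi t) ^+ 2)%:E
             = \int[mu]_(t in [set` I01]) ((a ^+ 2)%:E * (dphi t ^+ 2)%:E))%E.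
    by apply: eq_integral => t _; rewrite -EFinM exprMn.
  rewrite ge0_integralZl_nm ?sqr_ge0 //; last by move=> t _; rewrite lee_fin sqr_ge0.
  move: dphi_L2; rewrite -ge0_fin_numE ?integral_ge0 // => [/fineK <-|t _].
    by rewrite -EFinM ltry.
  by rewrite lee_fin sqr_ge0.
move=> x; rewrite in_itv => /andP[x0 x1].
have sub : [set` `[0%R, x]] `<=` [set` I01].
  by move=> t; rewrite /= !in_itv => /andP[-> tx]; exact: le_trans tx x1.
have dphi_int_x : mu.-integrable [set` `[0%R, x]] (EFin \o dphi).
  exact: (integrableS _ _ _ dphi_int).
have -> : (\int[mu]_(t in [set` `[0%R, x]]) (a * dphi t)%:E
           = \int[mu]_(t in [set` `[0%R, x]]) (a%:E * (dphi t)%:E))%E.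
  by apply: eq_integral => t _; rewrite -EFinM.
rewrite integralZl //; move: (phi_prim x); rewrite in_itv x0 x1 => /(_ isT).
by case: (\int[mu]_(t in _) _)%E => // r [->]; rewrite mulrDr EFinD EFinM.
Qed.

Lemma wnorm2Z (m : R -> R) (a : R) (phi : R -> R) :
  wnorm2 d s m (fun x => a * phi x) = ((a ^+ 2)%:E * wnorm2 d s m phi)%E.
Proof.
rewrite /wnorm2 -ge0_integralZl_nm ?sqr_ge0 //; last first.
  by move=> x x01; rewrite lee_fin mulr_ge0 ?weight_ge0 ?sqr_ge0.
by apply: eq_integral => x _; rewrite -EFinM exprMn mulrCA.
Qed.

Lemma rayleighZ (m : R -> R) (a : R) (phi dphi : R -> R) :
  rayleigh d c s m (fun x => a * phi x) (fun x => a * dphi x)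
  = ((a ^+ 2)%:E * rayleigh d c s m phi dphi)%E.
Proof.
rewrite /rayleigh -ge0_integralZl_nm ?sqr_ge0 //; last first.
  by move=> x x01; rewrite lee_fin rayleigh_integrand_ge0.
apply: eq_integral => x _; rewrite -EFinM !exprMn; congr EFin.
by ring.
Qed.

Lemma H1_01_cst (a : R) : H1_01 (cst a) (cst 0).
Proof.
split; first exact: measurable_cst.
split; first exact: integrable0.
split; first by rewrite integral0_eq ?ltry // => t _; rewrite expr0n.
by move=> x _; rewrite integral0_eq ?adde0.
Qed.

Lemma lam_le_rayleigh (m phi dphi : R -> R) (k : R) : 0 < k ->
  H1_01 phi dphi -> wnorm2 d s m phi = k%:E ->
  (lam d c s m <= k^-1%:E * rayleigh d c s m phi dphi)%E.
Proof.
move=> k0 phi_H1 phi_k.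
pose a := (Num.sqrt k)^-1.
have a2 : a ^+ 2 = k^-1 by rewrite exprVn sqr_sqrtr ?ltW.
rewrite -a2 -rayleighZ; apply: ereal_inf_lbound.
exists ((fun x => a * phi x), (fun x => a * dphi x)) => //; split.
  exact: H1_01Z.
by rewrite wnorm2Z phi_k -EFinM a2 mulVf ?gt_eqF.
Qed.

Lemma lam_ge0 (m : R -> R) : (0 <= lam d c s m)%E.
Proof.
apply: le_ereal_inf_tmp => _ [p _ <-].
by apply: integral_ge0 => x x01; rewrite lee_fin rayleigh_integrand_ge0.
Qed.

Lemma weight_integral_le (m : R -> R) (M : R) : 0 <= s ->
  (forall x, x \in I01 -> `|m x| <= M) ->
  (\int[mu]_(r in [set` I01]) (weight d s m r)%:E <= (expR (2 * s * M))%:E)%E.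
Proof.
move=> s0 mM.
have mu01 : mu [set` I01] = 1%E.
  by rewrite lebesgue_measure_itv /= lte_fin ltr01 /= oppr0 adde0.
rewrite -[leRHS]mule1 -mu01 -integral_cst ?measurable_itv //.
apply: ge0_le_integral_nm => x x01; first by rewrite lee_fin weight_ge0.
move: (x01); rewrite /= in_itv /= => /andP[x0 x1].
rewrite lee_fin /weight -[leRHS]mul1r ler_pM ?exprn_ge0 ?expR_ge0 ?exprn_ile1 //.
by rewrite ler_expR ler_wpM2l ?mulr_ge0 // (le_trans (ler_norm _) (mM x x01)).
Qed.

Lemma weight_integral_ge (m : R -> R) (M : R) : 0 <= s ->
  (forall x, x \in I01 -> `|m x| <= M) ->
  ((2^-1 ^+ d.-1 * expR (- (2 * s * M)) * 2^-1)%:E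
     <= \int[mu]_(r in [set` I01]) (weight d s m r)%:E)%E.
Proof.
move=> s0 mM.
pose A : set R := [set` `[2^-1, 1]].
set e := _ * expR _; have e0 : 0 < e by rewrite mulr_gt0 ?exprn_gt0 ?expR_gt0 ?invr_gt0.
have muA : mu (A `&` [set` I01]) = (2^-1)%:E.
  rewrite setIidl; last first.
    move=> x; rewrite /A /= !in_itv /= => /andP[x_ge ->]; rewrite andbT.
    by apply: le_trans x_ge; rewrite invr_ge0.
  rewrite lebesgue_measure_itv /= lte_fin invf_lt1 ?ltr1n //= -EFinD.
  by congr EFin; lra.
rewrite EFinM -muA -integral_indic //; last exact: measurable_itv.
rewrite -ge0_integralZl_nm ?(ltW e0) //.
apply: ge0_le_integral_nm => x x01.
  by rewrite -EFinM lee_fin mulr_ge0 ?(ltW e0) // indicE.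
rewrite -EFinM lee_fin indicE; have [xA|_] := boolP (x \in A); last first.
  by rewrite mulr0 weight_ge0.
move: xA => /set_mem; rewrite /A /= in_itv /= => /andP[x_ge _].
rewrite mulr1 /e /weight ler_pM ?exprn_ge0 ?expR_ge0 ?invr_ge0 //.
  by rewrite lerXn2r ?nnegrE ?invr_ge0 // (le_trans _ x_ge) ?invr_ge0.
by have := mM x x01; rewrite ler_expR ler_norml => /andP[Mm _]; nra.
Qed.

Lemma weight_integral_fin_gt0 (m : R -> R) : 0 <= s ->
  {within [set` I01], continuous m} ->
  exists2 w : R, 0 < w & (\int[mu]_(r in [set` I01]) (weight d s m r)%:E = w%:E)%E.
Proof.
move=> s0 /continuous01_bounded [M mM].
have W_ub := weight_integral_le s0 mM; have W_lb := weight_integral_ge s0 mM.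
set W := (\int[mu]_(r in _) _)%E in W_ub W_lb *; set e := _ * 2^-1 in W_lb.
have e0 : 0 < e by rewrite !mulr_gt0 ?exprn_gt0 ?expR_gt0 ?invr_gt0.
have W_fin : W \is a fin_num.
  by rewrite ge0_fin_numE ?(le_lt_trans W_ub) ?ltry // (le_trans _ W_lb) ?lee_fin ?ltW.
exists (fine W); last by rewrite fineK.
by rewrite -lte_fin fineK // (lt_le_trans _ W_lb).
Qed.

Lemma lam_le_ub (m : R -> R) (C : R) : 0 <= s ->
  {within [set` I01], continuous m} ->
  (forall x, x \in I01 -> c x <= C) -> (lam d c s m <= C%:E)%E.
Proof.
move=> s0 m_cont cC.
have [w w0 W_w] := weight_integral_fin_gt0 s0 m_cont.
have I0 : (0:R) \in I01 by rewrite in_itv /= lexx ler01.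
have C0 : 0 <= C := le_trans (c_ge0 I0) (cC _ I0).
have one_w : wnorm2 d s m (cst 1) = w%:E.
  by rewrite -W_w; apply: eq_integral => x _; rewrite expr1n mulr1.
apply: le_trans (lam_le_rayleigh w0 (H1_01_cst 1) one_w) _.
have -> : C = w^-1 * (C * w) by rewrite mulrCA mulVf ?gt_eqF ?mulr1.
rewrite EFinM lee_wpmul2l ?lee_fin ?invr_ge0 ?(ltW w0) // EFinM -W_w.
rewrite -ge0_integralZl_nm //; last by move=> x x01; rewrite lee_fin weight_ge0.
apply: ge0_le_integral_nm => x x01; first by rewrite lee_fin rayleigh_integrand_ge0.
rewrite -EFinM lee_fin /= expr0n expr1n add0r mulr1 mulrC.
by rewrite ler_wpM2r ?weight_ge0 ?cC.
Qed.

Lemma lam_le_expR_rayleigh (m1 m2 phi dphi : R -> R) (δ : R) : 0 <= s ->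
  (forall x, x \in I01 -> `|m1 x - m2 x| <= δ) ->
  H1_01 phi dphi -> wnorm2 d s m2 phi = 1%E ->
  (lam d c s m1 <= (expR (4 * s * δ))%:E * rayleigh d c s m2 phi dphi)%E.
Proof.
move=> s0 m12 phi_H1 phi_1.
have m21 x : x \in I01 -> `|m2 x - m1 x| <= δ by rewrite distrC; exact: m12.
set E := expR (2 * s * δ); have E0 : 0 < E := expR_gt0 _.
have -> : expR (4 * s * δ) = E * E by rewrite -expRD; congr expR; lra.
have K_ub : (wnorm2 d s m1 phi <= E%:E)%E.
  rewrite -[leRHS]mule1 -phi_1; apply: weighted_integral_le_expR => // x _.
  exact: sqr_ge0.
have K_lb : ((E^-1)%:E <= wnorm2 d s m1 phi)%E.
  rewrite -(@lee_pmul2l _ E%:E) ?lte_fin // -EFinM mulfV ?gt_eqF // -phi_1.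
  by apply: weighted_integral_le_expR => // x _; exact: sqr_ge0.
have K_fin : wnorm2 d s m1 phi \is a fin_num.
  rewrite ge0_fin_numE ?(le_lt_trans K_ub) ?ltry //.
  by apply: le_trans K_lb; rewrite lee_fin invr_ge0 ltW.
set k := fine (wnorm2 d s m1 phi).
have K_k : wnorm2 d s m1 phi = k%:E by rewrite fineK.
have k0 : 0 < k by rewrite -lte_fin -K_k (lt_le_trans _ K_lb) // lte_fin invr_gt0.
have kV_le : k^-1 <= E by rewrite invf_ple ?posrE // -lee_fin -K_k.
have ray12 : (rayleigh d c s m1 phi dphi <= E%:E * rayleigh d c s m2 phi dphi)%E.
  apply: weighted_integral_le_expR => // x x01.
  by rewrite addr_ge0 ?sqr_ge0 // mulr_ge0 ?sqr_ge0 ?c_ge0.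
have ray2_ge0 : (0 <= rayleigh d c s m2 phi dphi)%E.
  by apply: integral_ge0 => x x01; rewrite lee_fin rayleigh_integrand_ge0.
apply: le_trans (lam_le_rayleigh k0 phi_H1 K_k) _.
apply: le_trans (lee_wpmul2l _ ray12) _; first by rewrite lee_fin invr_ge0 ltW.
rewrite !muleA; apply: lee_wpmul2r => //.
by rewrite -!EFinM lee_fin ler_wpM2r // ltW.
Qed.

Lemma lam_le_expR (m1 m2 : R -> R) (δ : R) : 0 <= s ->
  (forall x, x \in I01 -> `|m1 x - m2 x| <= δ) ->
  (lam d c s m1 <= (expR (4 * s * δ))%:E * lam d c s m2)%E.
Proof.
move=> s0 m12; set E := expR _; have E0 : 0 < E := expR_gt0 _.
rewrite -[leLHS]mul1e -(mulfV (lt0r_neq0 E0)) EFinM -muleA lee_pmul2l ?lte_fin //.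
apply: le_ereal_inf_tmp => _ [[phi dphi] /= [phi_H1 phi_1] <-].
rewrite -(@lee_pmul2l _ E%:E) ?lte_fin // muleA -EFinM mulfV ?gt_eqF // mul1e.
exact: lam_le_expR_rayleigh.
Qed.

End rayleigh_quotient.

End lambda_estimates.

Theorem lemma4p1 (R : realType) (d : nat) (c : R -> R) :
  (1 <= d)%N ->
  {within `[0, 1], continuous c} ->
  (forall x : R, x \in `[0, 1] -> 0 < c x) ->
  forall (s : R) (m1 m2 : R -> R),
    0 < s -> C1_01 m1 -> C1_01 m2 ->
    (`| lam d c s m1 - lam d c s m2 |
       <= (max01 c * (expR (4 * s * supnorm01 (m1 \- m2)) - 1))%:E)%E.
Proof.
move=> _ c_cont c_gt0 s m1 m2 s_gt0 [m1_cont _] [m2_cont _].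
have c_ge0 x : x \in `[0, 1] -> 0 <= c x by move/c_gt0/ltW.
have [Mc cMc] := continuous01_bounded c_cont.
have [M1 m1M1] := continuous01_bounded m1_cont.
have [M2 m2M2] := continuous01_bounded m2_cont.
have m12 : forall x, x \in `[0, 1] -> `|m1 x - m2 x| <= supnorm01 (m1 \- m2).
  apply: (supnorm01_ub (M := M1 + M2)) => x x01.
  exact: le_trans (ler_normB _ _) (lerD (m1M1 x x01) (m2M2 x x01)).
have m21 x : x \in `[0, 1] -> `|m2 x - m1 x| <= supnorm01 (m1 \- m2).
  by rewrite distrC; exact: m12.
have I0 : (0 : R) \in `[0, 1] by rewrite in_itv /= lexx ler01.
have δ_ge0 := le_trans (normr_ge0 _) (m12 0 I0).
apply: lee_dist_of_ratio_bounds.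
- by rewrite -expR0 ler_expR !mulr_ge0 // ltW.
- rewrite lam_ge0 // lam_le_ub ?(ltW s_gt0) //; exact: max01_ub cMc.
- rewrite lam_ge0 // lam_le_ub ?(ltW s_gt0) //; exact: max01_ub cMc.
- exact: lam_le_expR (ltW s_gt0) m12.
- exact: lam_le_expR (ltW s_gt0) m21.
Qed.
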